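(* Let $F$ be a nondyadic nonarchimedean local field, $A$ a quaternion $F$-algebra, and $\mathcal O$ a Bass $O_F$-order in $A$ with Eichler invariant $e(\mathcal O)=0$. Then $\mathrm{Nr}(\mathcal O^\times)=O_F^{\times2}$.
   Context: Nondyadic means the residue characteristic is not $2$. An order is Gorenstein if its trace dual is projective as a left $\mathcal O$-module, and Bass if every overorder (including itself) is Gorenstein. With $\mathfrak k$ the residue field, the Eichler invariant of $\mathcal O\not\simeq M_2(O_F)$ is $1,0,-1$ according as $\mathcal O/J(\mathcal O)$ ($J$ = Jacobson radical) is $\mathfrak k\times\mathfrak k$, $\mathfrak k$, or the quadratic field extension of $\mathfrak k$. $\mathrm{Nr}$ is the reduced norm. *)

From HB Require Import structures.
From mathcomp Require Import all_boot all_order all_algebra.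
Set Implicit Arguments. Unset Strict Implicit. Unset Printing Implicit Defensive.
Import Order.TTheory GRing.Theory Num.Theory.
Local Open Scope ring_scope.

(* v : F -> int (the value at 0 is irrelevant and never used).          *)
Section Valuation.
Variables (F : fieldType) (v : F -> int).

Definition is_dvaluation : Prop :=
  [/\ (forall x y : F, x != 0 -> y != 0 -> v (x * y) = v x + v y),
      (forall x y : F, x != 0 -> y != 0 -> x + y != 0 ->
          Num.min (v x) (v y) <= v (x + y))
    & (exists pi : F, pi != 0 /\ v pi = 1)].

Definition in_OF (x : F) : Prop := x = 0 \/ 0 <= v x.
Definition in_pF (x : F) : Prop := x = 0 \/ 1 <= v x.
Definition OF_unit (x : F) : Prop := x != 0 /\ v x = 0.

Definition vclose (x y : F) (N : int) : Prop := x = y \/ N <= v (x - y).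

Definition v_cauchy (s : nat -> F) : Prop :=
  forall N : int, exists M : nat, forall m n, (M <= m)%N -> (M <= n)%N ->
    vclose (s m) (s n) N.

Definition v_complete : Prop :=
  forall s : nat -> F, v_cauchy s ->
    exists l : F, forall N : int, exists M : nat, forall n, (M <= n)%N ->
      vclose (s n) l N.

Definition finite_residue_field : Prop :=
  exists r : seq F, (forall y, y \in r -> in_OF y) /\
    forall x, in_OF x -> exists2 y, y \in r & in_pF (x - y).

Definition nonarch_local_field : Prop :=
  [/\ is_dvaluation, v_complete & finite_residue_field].

(* nondyadic: the residue characteristic is not 2, i.e. 2 is not in p_F *)
Definition nondyadic : Prop := ~ in_pF 2%:R.

End Valuation.

(* The quaternion algebra (a,b | F): basis 1,i,j,k=ij with i^2 = a,   *)
(* j^2 = b, ji = -ij (char F <> 2).  Elements are rows of coordinates.  *)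
Section Quaternion.
Variables (F : fieldType) (a b : F).

Notation A := 'rV[F]_4.

Definition qc (x : A) (n : nat) : F := x 0 (inord n).
Definition mkq (x0 x1 x2 x3 : F) : A := \row_(i < 4) [:: x0; x1; x2; x3]`_i.

Definition qone : A := mkq 1 0 0 0.

Definition qmul (x y : A) : A :=
  mkq (qc x 0 * qc y 0 + a * qc x 1 * qc y 1 + b * qc x 2 * qc y 2
         - a * b * qc x 3 * qc y 3)
      (qc x 0 * qc y 1 + qc x 1 * qc y 0 - b * qc x 2 * qc y 3
         + b * qc x 3 * qc y 2)
      (qc x 0 * qc y 2 + qc x 2 * qc y 0 + a * qc x 1 * qc y 3
         - a * qc x 3 * qc y 1)
      (qc x 0 * qc y 3 + qc x 3 * qc y 0 + qc x 1 * qc y 2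
         - qc x 2 * qc y 1).

Definition qconj (x : A) : A := mkq (qc x 0) (- qc x 1) (- qc x 2) (- qc x 3).

Definition nrd (x : A) : F := qc (qmul x (qconj x)) 0.
Definition trd (x : A) : F := qc (x + qconj x) 0.

Variable v : F -> int.

Definition is_lattice (O : A -> Prop) : Prop :=
  exists n (g : 'I_n -> A),
    (forall x, O x <-> exists c : 'I_n -> F,
        (forall i, in_OF v (c i)) /\ x = \sum_(i < n) c i *: g i) /\
    (forall x, exists c : 'I_n -> F, x = \sum_(i < n) c i *: g i).

Definition is_order (O : A -> Prop) : Prop :=
  [/\ is_lattice O, O qone
    & forall x y, O x -> O y -> O (qmul x y)].

Definition trace_dual (O : A -> Prop) (x : A) : Prop :=
  forall y, O y -> in_OF v (trd (qmul x y)).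

(* M (a subset of A stable under left multiplication by O) is a projective
   left O-module: it is a direct summand of a free module O^n, given as
   a split surjection  O^n -> M, c |-> sum c_i m_i,  with left O-linear
   section  g : M -> O^n. *)
Definition left_projective (O M : A -> Prop) : Prop :=
  exists n (m : 'I_n -> A) (g : 'I_n -> A -> A),
    [/\ (forall i, M (m i)),
        (forall i x, M x -> O (g i x)),
        (forall i r s x y, O r -> O s -> M x -> M y ->
            g i (qmul r x + qmul s y) = qmul r (g i x) + qmul s (g i y))
      & (forall x, M x -> x = \sum_(i < n) qmul (g i x) (m i))].

Definition Gorenstein (O : A -> Prop) : Prop :=
  left_projective O (trace_dual O).

Definition Bass (O : A -> Prop) : Prop :=
  forall O' : A -> Prop, is_order O' -> (forall x, O x -> O' x) ->
    Gorenstein O'.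

Definition left_ideal (O L : A -> Prop) : Prop :=
  [/\ (forall x, L x -> O x), L 0,
      (forall x y, L x -> L y -> L (x - y))
    & (forall r x, O r -> L x -> L (qmul r x))].

Definition max_left_ideal (O L : A -> Prop) : Prop :=
  [/\ left_ideal O L, (exists x, O x /\ ~ L x)
    & forall L', left_ideal O L' -> (forall x, L x -> L' x) ->
        (forall x, L' x <-> L x) \/ (forall x, L' x <-> O x)].

Definition jacobson (O : A -> Prop) (x : A) : Prop :=
  O x /\ forall L, max_left_ideal O L -> L x.

Definition order_unit (O : A -> Prop) (x : A) : Prop :=
  O x /\ exists y, O y /\ qmul x y = qone /\ qmul y x = qone.

Definition integral_mx (M : 'M[F]_2) : Prop := forall i j, in_OF v (M i j).

Definition iso_M2 (O : A -> Prop) : Prop :=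
  exists phi : A -> 'M[F]_2,
    [/\ (forall x, O x -> integral_mx (phi x)),
        (forall M, integral_mx M -> exists2 x, O x & phi x = M),
        (forall x y, O x -> O y -> phi x = phi y -> x = y)
      & (forall x y, O x -> O y -> phi (x + y) = phi x + phi y)] /\
    (forall x y, O x -> O y -> phi (qmul x y) = phi x *m phi y) /\
    phi qone = 1%:M.

(* Eichler invariant e(O) = 0: O is not isomorphic to M_2(O_F) and
   O / J(O) is isomorphic to the residue field k = O_F / p_F.  Both
   quotients are expressed through surjective ring morphisms onto a
   common ring k with the prescribed kernels. *)
Definition eichler_zero (O : A -> Prop) : Prop :=
  ~ iso_M2 O /\
  exists (k : nzRingType) (red : F -> k) (psi : A -> k),
    [/\
        (forall x y, in_OF v x -> in_OF v y -> red (x + y) = red x + red y),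
        (forall x y, in_OF v x -> in_OF v y -> red (x * y) = red x * red y),
        red 1 = 1,
        (forall t, exists2 x, in_OF v x & red x = t)
      & (forall x, in_OF v x -> (red x = 0 <-> in_pF v x))] /\
    [/\
        (forall x y, O x -> O y -> psi (x + y) = psi x + psi y),
        (forall x y, O x -> O y -> psi (qmul x y) = psi x * psi y),
        psi qone = 1,
        (forall t, exists2 x, O x & psi x = t)
      & (forall x, O x -> (psi x = 0 <-> jacobson O x))].

End Quaternion.

(* Elements of an order are integral, so Nr and Tr map O into O_F.  Elements j
   of J(O) have Nr j and Tr j in p_F: if Nr j were a unit, j would be invertible
   in O; if t = Tr j were a unit, a maximal left ideal containing the proper left
   ideal O (j - t) + pi O would contain j, hence the unit t.  As p_F lies in J(O),
   c |-> c mod J(O) embeds O_F / p_F into O / J(O) = k, which has the same finite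
   size, so every x in O is congruent mod J(O) to a scalar l, a unit if x is.
   Then x = l (1 + j) with j in J(O), and Nr x = l^2 (1 + Tr j + Nr j) is a
   square by Hensel's lemma, 2 being a unit. *)

From HB Require Import structures.
From mathcomp Require Import all_boot all_order all_algebra.
From mathcomp Require Import ring zify boolp.
Set Implicit Arguments. Unset Strict Implicit. Unset Printing Implicit Defensive.
Import Order.TTheory GRing.Theory Num.Theory.
Local Open Scope ring_scope.

Section QuaternionArithmetic.
Variables (F : fieldType) (a b : F).
Local Notation A := 'rV[F]_4.
Local Notation qmul := (qmul a b).
Local Notation nrd := (nrd a b).
Local Notation qone := (@qone F).

Lemma qc_mkq0 (x0 x1 x2 x3 : F) : qc (mkq x0 x1 x2 x3) 0 = x0.
Proof. by rewrite /qc /mkq mxE inordK. Qed.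
Lemma qc_mkq1 (x0 x1 x2 x3 : F) : qc (mkq x0 x1 x2 x3) 1 = x1.
Proof. by rewrite /qc /mkq mxE inordK. Qed.
Lemma qc_mkq2 (x0 x1 x2 x3 : F) : qc (mkq x0 x1 x2 x3) 2 = x2.
Proof. by rewrite /qc /mkq mxE inordK. Qed.
Lemma qc_mkq3 (x0 x1 x2 x3 : F) : qc (mkq x0 x1 x2 x3) 3 = x3.
Proof. by rewrite /qc /mkq mxE inordK. Qed.
Lemma qc0 n : qc (0 : A) n = 0.
Proof. by rewrite /qc mxE. Qed.
Lemma qcD (x y : A) n : qc (x + y) n = qc x n + qc y n.
Proof. by rewrite /qc mxE. Qed.
Lemma qcN (x : A) n : qc (- x) n = - qc x n.
Proof. by rewrite /qc mxE. Qed.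
Lemma qcZ c (x : A) n : qc (c *: x) n = c * qc x n.
Proof. by rewrite /qc mxE. Qed.
Lemma qc_sum m (f : 'I_m -> A) n : qc (\sum_(i < m) f i) n = \sum_(i < m) qc (f i) n.
Proof. by rewrite /qc summxE. Qed.

Lemma quat_ext (x y : A) :
  qc x 0 = qc y 0 -> qc x 1 = qc y 1 -> qc x 2 = qc y 2 -> qc x 3 = qc y 3 ->
  x = y.
Proof.
rewrite /qc => e0 e1 e2 e3; apply/rowP => i; rewrite -[i]inord_val.
by case: i => -[|[|[|[|i]]]].
Qed.

Let qcE := (qc_mkq0, qc_mkq1, qc_mkq2, qc_mkq3, qc0, qcD, qcN, qcZ).

Lemma qmulA (x y z : A) : qmul x (qmul y z) = qmul (qmul x y) z.
Proof. by apply: quat_ext; rewrite /qmul !qcE; ring. Qed.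
Lemma qmulDl (x y z : A) : qmul (x + y) z = qmul x z + qmul y z.
Proof. by apply: quat_ext; rewrite /qmul !qcE; ring. Qed.
Lemma qmulDr (x y z : A) : qmul x (y + z) = qmul x y + qmul x z.
Proof. by apply: quat_ext; rewrite /qmul !qcE; ring. Qed.
Lemma qmulBl (x y z : A) : qmul (x - y) z = qmul x z - qmul y z.
Proof. by apply: quat_ext; rewrite /qmul !qcE; ring. Qed.
Lemma qmulZl c (x y : A) : qmul (c *: x) y = c *: qmul x y.
Proof. by apply: quat_ext; rewrite /qmul !qcE; ring. Qed.
Lemma qmulZr c (x y : A) : qmul x (c *: y) = c *: qmul x y.
Proof. by apply: quat_ext; rewrite /qmul !qcE; ring. Qed.
Lemma qmul1l (x : A) : qmul qone x = x.
Proof. by apply: quat_ext; rewrite /qmul /qone !qcE; ring. Qed.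
Lemma qmul1r (x : A) : qmul x qone = x.
Proof. by apply: quat_ext; rewrite /qmul /qone !qcE; ring. Qed.
Lemma qmul0l (x : A) : qmul 0 x = 0.
Proof. by apply: quat_ext; rewrite /qmul !qcE; ring. Qed.

Lemma qmulCl c (x : A) : qmul (c *: qone) x = c *: x.
Proof. by rewrite qmulZl qmul1l. Qed.
Lemma qmulCC c d : qmul (c *: qone) (d *: qone) = (c * d) *: qone.
Proof. by rewrite qmulCl scalerA. Qed.

Lemma qmul_sqr (x : A) : qmul x x = trd x *: x - nrd x *: qone.
Proof. by apply: quat_ext; rewrite /trd /nrd /qconj /qone /qmul !qcE; ring. Qed.
Lemma qmul_conjr (x : A) : qmul x (trd x *: qone - x) = nrd x *: qone.
Proof. by apply: quat_ext; rewrite /trd /nrd /qconj /qone /qmul !qcE; ring. Qed.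
Lemma qmul_conjl (x : A) : qmul (trd x *: qone - x) x = nrd x *: qone.
Proof. by apply: quat_ext; rewrite /trd /nrd /qconj /qone /qmul !qcE; ring. Qed.

Lemma nrdE (x : A) : nrd x =
  qc x 0 * qc x 0 - a * (qc x 1 * qc x 1) - b * (qc x 2 * qc x 2)
  + a * b * (qc x 3 * qc x 3).
Proof. by rewrite /nrd /qconj /qmul !qcE; ring. Qed.
Lemma trdE (x : A) : trd x = qc x 0 + qc x 0.
Proof. by rewrite /trd /qconj !qcE. Qed.

Lemma nrdM (x y : A) : nrd (qmul x y) = nrd x * nrd y.
Proof. by rewrite !nrdE /qmul !qcE; ring. Qed.
Lemma nrd1 : nrd qone = 1.
Proof. by rewrite nrdE /qone !qcE; ring. Qed.
Lemma nrdZ c (x : A) : nrd (c *: x) = c ^+ 2 * nrd x.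
Proof. by rewrite !nrdE !qcE; ring. Qed.
Lemma nrdDC c (x : A) : nrd (c *: qone + x) = c ^+ 2 + c * trd x + nrd x.
Proof. by rewrite !nrdE trdE /qone !qcE; ring. Qed.
Lemma trdZ c (x : A) : trd (c *: x) = c * trd x.
Proof. by rewrite !trdE !qcE; ring. Qed.

End QuaternionArithmetic.

Lemma subrKB (V : zmodType) (z x y : V) : (x - z) - (y - z) = x - y.
Proof. by rewrite opprB addrA subrK. Qed.

Section Valuation.
Variables (F : fieldType) (v : F -> int).
Hypothesis hv : is_dvaluation v.

(* [vge N x] says x is in p_F ^ N; [in_OF v] and [in_pF v] are [vge 0] and [vge 1]. *)
Definition vge (N : int) (x : F) : Prop := x = 0 \/ N <= v x.

Lemma vM x y : x != 0 -> y != 0 -> v (x * y) = v x + v y.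
Proof. by case: hv => vM _ _; apply: vM. Qed.

Lemma v1 : v 1 = 0.
Proof.
have := @vM 1 1; rewrite mulr1 oner_neq0 => /(_ isT isT).
by rewrite -{1}[v 1]addr0 => /addrI <-.
Qed.

Lemma vV x : x != 0 -> v x^-1 = - v x.
Proof. by move=> x0; have := vM x0 (invr_neq0 x0); rewrite mulfV // v1; lia. Qed.

Lemma vN x : v (- x) = v x.
Proof.
have [->|x0] := eqVneq x 0; first by rewrite oppr0.
have N1_0 : (-1 : F) != 0 by rewrite oppr_eq0 oner_neq0.
have := vM N1_0 N1_0; rewrite mulrNN mulr1 v1 => vN1.
by rewrite -mulN1r vM //; lia.
Qed.

Lemma vX x n : x != 0 -> v (x ^+ n) = n%:Z * v x.
Proof.
move=> x0; elim: n => [|n IHn]; first by rewrite expr0 v1 mul0r.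
by rewrite exprS vM ?expf_neq0 // IHn; lia.
Qed.

Lemma vge0 N : vge N 0. Proof. by left. Qed.
Lemma vge_v x : vge (v x) x. Proof. by right. Qed.
Lemma vge01 : vge 0 1. Proof. by right; rewrite v1. Qed.
Lemma vge11 : ~ vge 1 1.
Proof. by case=> [/eqP|]; rewrite ?oner_eq0 ?v1. Qed.

Lemma vgeW N M x : vge N x -> M <= N -> vge M x.
Proof. by case=> [->|Nx] le; [left | right; lia]. Qed.

Lemma vgeD N x y : vge N x -> vge N y -> vge N (x + y).
Proof.
case: hv => _ vD _.
have [->|x0] := eqVneq x 0; first by rewrite add0r.
have [->|y0] := eqVneq y 0; first by rewrite addr0.
have [->|xy0] := eqVneq (x + y) 0; first by left.
case=> [/eqP|Nx]; first by rewrite (negPf x0).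
case=> [/eqP|Ny]; first by rewrite (negPf y0).
by right; apply: le_trans (vD x y x0 y0 xy0); rewrite le_min Nx Ny.
Qed.

Lemma vgeN N x : vge N x -> vge N (- x).
Proof. by case=> [->|Nx]; [left; rewrite oppr0 | right; rewrite vN]. Qed.

Lemma vgeB N x y : vge N x -> vge N y -> vge N (x - y).
Proof. by move=> Nx Ny; apply: vgeD Nx (vgeN Ny). Qed.

Lemma vgeM N M x y : vge N x -> vge M y -> vge (N + M) (x * y).
Proof.
have [->|x0] := eqVneq x 0; first by rewrite mul0r; left.
have [->|y0] := eqVneq y 0; first by rewrite mulr0; left.
case=> [/eqP|Nx]; first by rewrite (negPf x0).
case=> [/eqP|My]; first by rewrite (negPf y0).
by right; rewrite vM //; lia.
Qed.

Lemma vgeM0l N x y : vge 0 x -> vge N y -> vge N (x * y).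
Proof. by move=> x0 Ny; have := vgeM x0 Ny; rewrite add0r. Qed.

Lemma vgeM0r N x y : vge N x -> vge 0 y -> vge N (x * y).
Proof. by move=> Nx y0; rewrite mulrC; apply: vgeM0l. Qed.

Lemma vge_lim x : (forall N, vge N x) -> x = 0.
Proof. by move=> Nx; case: (Nx (v x + 1)) => //; lia. Qed.

Lemma vcloseP x y N : vclose v x y N <-> vge N (x - y).
Proof.
split=> [[->|] | [/eqP|]]; rewrite ?subrr; [by left | by right | | by right].
by rewrite subr_eq0 => /eqP; left.
Qed.

Lemma vge_divp p d : p != 0 -> v p = 1 -> vge 1 d -> vge 0 (d / p).
Proof.
move=> p0 vp.
have [->|d0] := eqVneq d 0; first by rewrite mul0r; left.
case=> [/eqP|d1]; first by rewrite (negPf d0).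
by right; rewrite vM ?invr_eq0 // vV // vp; lia.
Qed.

Lemma vge_seq_bound (s : seq F) : exists D : int, forall x, x \in s -> vge (- D) x.
Proof.
elim: s => [|y s [D s_D]]; first by exists 0.
exists (`|D| + `|v y|) => x; rewrite inE => /orP[/eqP ->|/s_D x_D].
  by apply: vgeW (vge_v y) _; lia.
by apply: vgeW x_D _; lia.
Qed.

Lemma OF_unit_int_notpF x : vge 0 x -> ~ vge 1 x -> OF_unit v x.
Proof.
case=> [->|x0] x1; first by case: x1; left.
have x_neq0 : x != 0 by apply/eqP => e; apply: x1; left.
have : ~ 1 <= v x by move=> ?; apply: x1; right.
by split=> //; lia.
Qed.

Lemma OF_unit_int x : OF_unit v x -> vge 0 x.
Proof. by case=> _ vx; right; rewrite vx. Qed.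

Lemma OF_unitV x : OF_unit v x -> OF_unit v x^-1.
Proof. by case=> x0 vx; split; rewrite ?invr_eq0 // vV // vx. Qed.

Lemma OF_unitM x y : OF_unit v x -> OF_unit v y -> OF_unit v (x * y).
Proof. by case=> x0 vx [y0 vy]; split; rewrite ?mulf_neq0 // vM // vx vy. Qed.

Lemma OF_unit_1pF x : vge 1 (x - 1) -> OF_unit v x.
Proof.
move=> x1; have x_int : vge 0 x by rewrite -(subrK 1 x); apply: vgeD (vgeW x1 _) vge01.
apply: OF_unit_int_notpF => // xp; apply: vge11.
by rewrite -(subKr x 1); apply: vgeB.
Qed.

Section Hensel.
Hypotheses (hc : v_complete v) (hnd : nondyadic v).

Lemma OF_unit2 : OF_unit v 2.
Proof. by apply: OF_unit_int_notpF hnd; apply: vgeD; apply: vge01. Qed.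

Lemma vge_half : vge 0 2^-1.
Proof. exact/OF_unit_int/OF_unitV/OF_unit2. Qed.

(* Newton's iteration for the square root with 2 s replaced by 2: this
   still gains one power of the uniformizer per step because s = 1 mod p. *)
Fixpoint sqrt_approx (w : F) (n : nat) : F :=
  if n is n'.+1 then
    let s := sqrt_approx w n' in s - (s ^+ 2 - w) / 2
  else 1.

Variable w : F.
Hypothesis w1 : vge 1 (w - 1).

Lemma sqrt_approxP n :
  vge 1 (sqrt_approx w n - 1) /\ vge n.+1 (sqrt_approx w n ^+ 2 - w).
Proof.
have [two0 _] := OF_unit2.
elim: n => [|n [IH1 IH2]] /=.
  by rewrite subrr expr1n -opprB; split; [left | apply: vgeN].
set s := sqrt_approx w n in IH1 IH2 *; set d := s ^+ 2 - w in IH2 *.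
have d_half : vge n.+1 (d / 2) by apply: vgeM0r IH2 vge_half.
split; first by rewrite addrAC; apply: vgeB IH1 (vgeW d_half _).
have -> : (s - d / 2) ^+ 2 - w = d * (1 - s) + d / 2 * (d / 2).
  by rewrite /d; field.
apply: vgeD; last by apply: vgeW (vgeM d_half d_half) _; lia.
by rewrite -opprB; apply: vgeW (vgeM IH2 (vgeN IH1)) _; lia.
Qed.

Lemma sqrt_approx_cauchy n m : vge n.+1 (sqrt_approx w (n + m) - sqrt_approx w n).
Proof.
elim: m => [|m IHm]; first by rewrite addn0 subrr; left.
rewrite addnS -(subrK (sqrt_approx w (n + m)) (sqrt_approx w _)) -addrA.
apply: vgeD IHm; rewrite /= addrAC subrr add0r; apply: vgeN.
by apply: vgeM0r vge_half; apply: vgeW (proj2 (sqrt_approxP _)) _; lia.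
Qed.

Lemma hensel_sqrt : exists2 s, OF_unit v s & w = s ^+ 2.
Proof.
have approx_close N m :
    (absz N <= m)%N -> vge N (sqrt_approx w m - sqrt_approx w (absz N)).
  by move=> le; rewrite -(subnKC le); apply: vgeW (sqrt_approx_cauchy _ _) _; lia.
have [|s lim_s] := hc (s := sqrt_approx w).
  move=> N; exists (absz N) => m n Nm Nn; apply/vcloseP.
  rewrite -(subrKB (sqrt_approx w (absz N))).
  by apply: vgeB; apply: approx_close.
have near_s N : exists M, forall n, (M <= n)%N -> vge N (sqrt_approx w n - s).
  by have [M hM] := lim_s N; exists M => n /hM /vcloseP.
have [M1 hM1] := near_s 1.
have s_unit : OF_unit v s.
  apply: OF_unit_1pF; rewrite -(subrKB (sqrt_approx w M1)).
  apply: vgeB; rewrite -opprB; apply: vgeN; first exact: hM1.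
  exact: (proj1 (sqrt_approxP _)).
exists s => //; apply/esym/eqP; rewrite -subr_eq0; apply/eqP/vge_lim => N.
have [M hM] := near_s N; set n := maxn M (absz N); set x := sqrt_approx w n.
have [x1 x2w] := sqrt_approxP n.
have xs_int : vge 0 (x + s).
  rewrite -(subrK 1 x) -addrA; apply: vgeD (vgeW x1 _) _ => //.
  exact: vgeD vge01 (OF_unit_int s_unit).
have -> : s ^+ 2 - w = (x ^+ 2 - w) - (x + s) * (x - s) by ring.
apply: vgeB; first by apply: vgeW x2w _; rewrite /n; lia.
exact: vgeM0l xs_int (hM n (leq_maxl _ _)).
Qed.

End Hensel.

Section Order.
Variables (a b : F) (O : 'rV[F]_4 -> Prop).
Local Notation A := 'rV[F]_4.
Local Notation qmul := (qmul a b).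
Local Notation nrd := (nrd a b).
Local Notation qone := (@qone F).
Variables (n : nat) (g : 'I_n -> A).
Hypothesis O_span : forall x, O x <-> exists c : 'I_n -> F,
  (forall i, in_OF v (c i)) /\ x = \sum_(i < n) c i *: g i.
Hypotheses (O1 : O qone) (OM : forall x y, O x -> O y -> O (qmul x y)).

Lemma O0 : O 0.
Proof.
apply/O_span; exists (fun=> 0); split=> [i|]; first exact: vge0.
by rewrite big1 // => i _; rewrite scale0r.
Qed.

Lemma OD x y : O x -> O y -> O (x + y).
Proof.
move=> /O_span[c [c_int ->]] /O_span[d [d_int ->]]; apply/O_span.
exists (fun i => c i + d i); split=> [i|]; first exact: vgeD (c_int i) (d_int i).
by rewrite -big_split; apply: eq_bigr => i _; rewrite scalerDl.
Qed.

Lemma OZ c x : vge 0 c -> O x -> O (c *: x).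
Proof.
move=> c_int /O_span[d [d_int ->]]; apply/O_span.
exists (fun i => c * d i); split=> [i|]; first exact: vgeM0l c_int (d_int i).
by rewrite scaler_sumr; apply: eq_bigr => i _; rewrite scalerA.
Qed.

Lemma ON x : O x -> O (- x).
Proof. by rewrite -scaleN1r; apply: OZ; apply/vgeN/vge01. Qed.

Lemma OB x y : O x -> O y -> O (x - y).
Proof. by move=> Ox Oy; apply: OD Ox (ON Oy). Qed.

Lemma OC c : vge 0 c -> O (c *: qone).
Proof. by move=> c_int; apply: OZ. Qed.

Lemma qc_bound : exists D : int,
  forall y, O y -> forall k, (k < 4)%N -> vge (- D) (qc y k).
Proof.
have [D g_D] := vge_seq_bound [seq qc (g i) k | i <- enum 'I_n, k <- iota 0 4].
exists D => _ /O_span[c [c_int ->]] k k4.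
rewrite qc_sum; apply: (big_ind (vge (- D))) => [|x y|i _]; [exact: vge0|exact: vgeD|].
rewrite qcZ; apply: vgeM0l (c_int i) (g_D _ _).
by apply: allpairs_f; rewrite ?mem_enum ?mem_iota.
Qed.

Lemma nrd_bound : exists C : int, forall y, O y -> vge (- C) (nrd y).
Proof.
have [D qc_D] := qc_bound.
exists (`|D| + `|D| + `|v a| + `|v b|) => y Oy.
have [y0 y1] := (qc_D y Oy 0%N isT, qc_D y Oy 1%N isT).
have [y2 y3] := (qc_D y Oy 2%N isT, qc_D y Oy 3%N isT).
have ab : vge (v a + v b) (a * b) by apply: vgeM; apply: vge_v.
rewrite nrdE; apply: vgeD; [apply: vgeB; [apply: vgeB|]|].
- by apply: vgeW (vgeM y0 y0) _; lia.
- by apply: vgeW (vgeM (vge_v a) (vgeM y1 y1)) _; lia.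
- by apply: vgeW (vgeM (vge_v b) (vgeM y2 y2)) _; lia.
- by apply: vgeW (vgeM ab (vgeM y3 y3)) _; lia.
Qed.

Fixpoint qpow (x : A) (m : nat) : A := if m is m'.+1 then qmul x (qpow x m') else qone.

Lemma O_qpow x m : O x -> O (qpow x m).
Proof. by move=> Ox; elim: m => //= m; apply: OM. Qed.

Lemma nrd_qpow x m : nrd (qpow x m) = nrd x ^+ m.
Proof. by elim: m => [|m IHm] /=; rewrite ?nrd1 ?expr0 // nrdM IHm exprS. Qed.

(* Nr (x ^ m) = Nr x ^ m is bounded below on the lattice O. *)
Lemma nrd_int x : O x -> vge 0 (nrd x).
Proof.
move=> Ox; have [C nrd_C] := nrd_bound.
have [->|m0] := eqVneq (nrd x) 0; first exact: vge0.
right; apply: contraTT isT; rewrite -ltNge => vm.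
have := nrd_C _ (O_qpow (absz C).+1 Ox); rewrite nrd_qpow.
by case=> [/eqP|]; rewrite ?expf_eq0 ?(negPf m0) ?andbF // vX //; nia.
Qed.

Lemma trd_int x : O x -> vge 0 (trd x).
Proof.
move=> Ox; have O1x : O (1 *: qone + x) by apply: OD (OC vge01) Ox.
have -> : trd x = nrd (1 *: qone + x) - 1 - nrd x by rewrite nrdDC; ring.
exact: vgeB (vgeB (nrd_int O1x) vge01) (nrd_int Ox).
Qed.

Lemma order_unit_nrd x : O x -> OF_unit v (nrd x) -> order_unit a b O x.
Proof.
move=> Ox m_unit; have [m0 _] := m_unit.
split=> //; exists ((nrd x)^-1 *: (trd x *: qone - x)); split; last split.
- exact: OZ (OF_unit_int (OF_unitV m_unit)) (OB (OC (trd_int Ox)) Ox).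
- by rewrite qmulZr qmul_conjr scalerA mulVf // scale1r.
- by rewrite qmulZl qmul_conjl scalerA mulVf // scale1r.
Qed.

Lemma left_ideal_O L x : left_ideal a b O L -> L x -> O x.
Proof. by case=> LO _ _ _; apply: LO. Qed.

Lemma left_ideal1 L : left_ideal a b O L -> L qone -> forall x, O x -> L x.
Proof. by case=> _ _ _ LM L1 x Ox; rewrite -(qmul1r a b x); apply: LM. Qed.

Lemma left_ideal_unit L x : left_ideal a b O L -> order_unit a b O x -> L x -> L qone.
Proof. by case=> _ _ _ LM [_ [y [Oy [_ yx]]]] Lx; rewrite -yx; apply: LM. Qed.

(* If c in p_F, then L + c O = O would make 1 - c z in L a unit. *)
Lemma jacobson_pF c : vge 1 c -> jacobson a b O (c *: qone).
Proof.
move=> c1; have c_int : vge 0 c by apply: vgeW c1 _.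
split=> [|L [L_ideal [x [Ox Lx]] L_max]]; first exact: OC.
apply: contrapT => Lc.
pose L' y := exists l z, [/\ L l, O z & y = l + c *: z].
have L'_ideal : left_ideal a b O L'.
  case: (L_ideal) => _ L0 LB LM; split.
  - by move=> _ [l [z [Ll Oz ->]]]; apply: OD (left_ideal_O L_ideal Ll) (OZ c_int Oz).
  - by exists 0, 0; rewrite scaler0 addr0; split=> //; exact: O0.
  - move=> _ _ [l1 [z1 [Ll1 Oz1 ->]]] [l2 [z2 [Ll2 Oz2 ->]]].
    exists (l1 - l2), (z1 - z2); split; [exact: LB | exact: OB |].
    by rewrite scalerBr opprD addrACA.
  - move=> y _ Oy [l [z [Ll Oz ->]]]; exists (qmul y l), (qmul y z).
    by rewrite qmulDr qmulZr; split=> //; [apply: LM | apply: OM].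
have LL' y : L y -> L' y.
  by move=> Ly; exists y, 0; rewrite scaler0 addr0; split=> //; exact: O0.
case: (L_max L' L'_ideal LL') => [L'L | L'O].
  by apply/Lc/L'L; exists 0, qone; rewrite add0r; split=> //; case: L_ideal.
have [l [z [Ll Oz e]]] := proj2 (L'O qone) O1.
apply: Lx (left_ideal1 L_ideal (left_ideal_unit L_ideal _ Ll) Ox).
apply: order_unit_nrd; first exact: left_ideal_O L_ideal Ll.
have -> : l = 1 *: qone + (- c) *: z by rewrite e scale1r scaleNr addrK.
rewrite nrdDC trdZ nrdZ; apply: OF_unit_1pF.
have -> : 1 ^+ 2 + 1 * (- c * trd z) + (- c) ^+ 2 * nrd z - 1 = c * (c * nrd z - trd z).
  by ring.
apply: vgeM0r c1 _.
exact: vgeB (vgeM0l c_int (nrd_int Oz)) (trd_int Oz).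
Qed.

Definition lideal_gen (w : A) (c : F) (x : A) : Prop :=
  exists y z, [/\ O y, O z & x = qmul y w + c *: z].

Lemma left_ideal_gen w c : O w -> vge 0 c -> left_ideal a b O (lideal_gen w c).
Proof.
move=> Ow c_int; split.
- by move=> _ [y [z [Oy Oz ->]]]; apply: OD (OM Oy Ow) (OZ c_int Oz).
- by exists 0, 0; rewrite qmul0l scaler0 addr0; split=> //; exact: O0.
- move=> _ _ [y1 [z1 [Oy1 Oz1 ->]]] [y2 [z2 [Oy2 Oz2 ->]]].
  exists (y1 - y2), (z1 - z2); split; [exact: OB | exact: OB |].
  by rewrite qmulBl scalerBr opprD addrACA.
- move=> x _ Ox [y [z [Oy Oz ->]]]; exists (qmul x y), (qmul x z).
  by rewrite qmulDr qmulA qmulZr; split=> //; apply: OM.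
Qed.

Variables (pi : F) (r : seq F).
Hypotheses (pi0 : pi != 0) (vpi : v pi = 1).
Hypotheses (r_int : forall y, y \in r -> in_OF v y)
  (r_onto : forall x, in_OF v x -> exists2 y, y \in r & in_pF v (x - y)).

Definition residue_rep (f : {ffun 'I_n -> seq_sub r}) : A :=
  \sum_i ssval (f i) *: g i.

Lemma residue_rep_onto x : O x -> exists f z, O z /\ x = residue_rep f + pi *: z.
Proof.
move=> /O_span[c [c_int ->]].
have /fin_all_exists[f f_c] : forall i, exists y : seq_sub r, vge 1 (c i - ssval y).
  by move=> i; have [y ry cy] := r_onto (c_int i); exists (SeqSub ry).
exists [ffun i => f i], (\sum_i ((c i - ssval (f i)) / pi) *: g i); split.
  apply/O_span; exists (fun i => (c i - ssval (f i)) / pi).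
  by split=> // i; apply: vge_divp.
rewrite /residue_rep scaler_sumr -big_split; apply: eq_bigr => i _ /=.
by rewrite ffunE scalerA mulrC divfK // -scalerDl addrC subrK.
Qed.

(* The number of residue classes mod pi O met by a left ideal containing pi O. *)
Definition ideal_index (L : A -> Prop) : nat := #|[set f | `[< L (residue_rep f) >]]|.

Lemma ideal_index_lt L L' :
  left_ideal a b O L -> left_ideal a b O L' -> (forall z, O z -> L (pi *: z)) ->
  (forall x, L x -> L' x) -> (exists2 x, L' x & ~ L x) ->
  (ideal_index L < ideal_index L')%N.
Proof.
move=> L_ideal L'_ideal piL LL' [x L'x Lx].
have [f [z [Oz ex]]] := residue_rep_onto (left_ideal_O L'_ideal L'x).
case: L_ideal L'_ideal => _ _ LB _ [_ _ L'B _].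
apply: proper_card; apply/properP; split.
  by apply/subsetP => f'; rewrite !inE => /asboolP/LL' /asboolP.
exists f; rewrite inE.
  apply/asboolP; rewrite -[residue_rep f](addrK (pi *: z)) -ex.
  exact: L'B L'x (LL' _ (piL _ Oz)).
apply/negP => /asboolP Lf; apply: Lx; rewrite ex -[pi *: z]opprK -scalerN.
exact: LB Lf (piL _ (ON Oz)).
Qed.

Lemma exists_max_left_ideal L0 :
  left_ideal a b O L0 -> (forall z, O z -> L0 (pi *: z)) -> ~ L0 qone ->
  exists L, max_left_ideal a b O L /\ forall x, L0 x -> L x.
Proof.
move=> L0_ideal piL0 L0N1.
pose P m := `[< exists2 L, [/\ left_ideal a b O L, forall x, L0 x -> L x & ~ L qone]
                           & ideal_index L = m >].
have P_L0 : exists m, P m by exists (ideal_index L0); apply/asboolP; exists L0.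
have P_ub m : P m -> (m <= #|{ffun 'I_n -> seq_sub r}|)%N.
  by move=> /asboolP[L _ <-]; apply: max_card.
case: (ex_maxnP P_L0 P_ub) => _ /asboolP[L [L_ideal L0L LN1] <-] L_max.
exists L; split=> //; split=> //; first by exists qone.
move=> L' L'_ideal LL'.
have [L'1|L'N1] := pselect (L' qone).
  right=> x; split; first exact: left_ideal_O.
  exact: left_ideal1.
left=> x; split=> [L'x|]; last exact: LL'.
apply: contrapT => Lx.
have lt := ideal_index_lt L_ideal L'_ideal (fun z Oz => L0L _ (piL0 _ Oz)) LL'
  (ex_intro2 _ _ x L'x Lx).
have : P (ideal_index L') by apply/asboolP; exists L'; split=> // y /L0L /LL'.
by move=> /L_max; lia.
Qed.

Lemma order_unit_C c : OF_unit v c -> order_unit a b O (c *: qone).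
Proof.
move=> c_unit; apply: order_unit_nrd; first exact/OC/OF_unit_int.
by rewrite nrdZ nrd1 mulr1; apply: OF_unitM.
Qed.

Section ResidueMap.
Variables (k : nzRingType) (red : F -> k) (psi : A -> k).
Hypotheses
  (redD : forall x y, in_OF v x -> in_OF v y -> red (x + y) = red x + red y)
  (red_onto : forall t, exists2 x, in_OF v x & red x = t)
  (red_eq0 : forall x, in_OF v x -> (red x = 0 <-> in_pF v x)).
Hypotheses
  (psiD : forall x y, O x -> O y -> psi (x + y) = psi x + psi y)
  (psiM : forall x y, O x -> O y -> psi (qmul x y) = psi x * psi y)
  (psi1 : psi qone = 1)
  (psi_eq0 : forall x, O x -> (psi x = 0 <-> jacobson a b O x)).

Lemma psiB x y : O x -> O y -> psi (x - y) = psi x - psi y.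
Proof. by move=> Ox Oy; rewrite -{2}(subrK y x) (psiD (OB Ox Oy) Oy) addrK. Qed.

Lemma psi_unit x : order_unit a b O x -> psi x != 0.
Proof.
case=> Ox [y [Oy [xy _]]]; apply/eqP => px.
by have /eqP := psiM Ox Oy; rewrite xy psi1 px mul0r oner_eq0.
Qed.

Lemma psi_pF c : vge 1 c -> psi (c *: qone) = 0.
Proof. by move=> c1; apply/psi_eq0; [apply/OC/(vgeW c1) | apply: jacobson_pF]. Qed.

Lemma psi_ker_nrd j : O j -> psi j = 0 -> vge 1 (nrd j).
Proof.
move=> Oj pj; apply: contrapT => jN1.
have := psi_unit (order_unit_nrd Oj (OF_unit_int_notpF (nrd_int Oj) jN1)).
by rewrite pj eqxx.
Qed.

Lemma psi_ker_trd j : O j -> psi j = 0 -> vge 1 (trd j).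
Proof.
move=> Oj pj; apply: contrapT => jN1.
have pi_int : vge 0 pi by right; rewrite vpi.
have t_unit := OF_unit_int_notpF (trd_int Oj) jN1.
set t := trd j in t_unit jN1; set w := j - t *: qone.
have Ow : O w by apply: OB Oj (OC (OF_unit_int t_unit)).
have wj : qmul w j = (- nrd j) *: qone.
  by rewrite qmulBl qmul_sqr qmulCl addrAC subrr add0r scaleNr.
have L0_ideal := left_ideal_gen Ow pi_int.
have piL0 z : O z -> lideal_gen w pi (pi *: z).
  by exists 0, z; rewrite qmul0l add0r; split=> //; exact: O0.
(* From 1 = y w + pi z and w j = - Nr j in pi O_F we get j in pi O. *)
have L0N1 : ~ lideal_gen w pi qone.
  case=> y [z [Oy Oz e]]; apply: jN1.
  have m_pi : vge 0 (nrd j / pi) by apply: vge_divp (psi_ker_nrd Oj pj).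
  have ej : j = pi *: ((- (nrd j / pi)) *: y + qmul z j).
    rewrite scalerDr scalerA mulrN mulrCA mulfV // mulr1.
    by rewrite -{1}(qmul1l a b j) e qmulDl -qmulA wj qmulZr qmul1r qmulZl.
  have -> : t = pi * trd ((- (nrd j / pi)) *: y + qmul z j) by rewrite /t {1}ej trdZ.
  apply: vgeM0r; first by right; rewrite vpi.
  by apply/trd_int/OD; [apply: OZ (vgeN m_pi) Oy | apply: OM].
have [L [L_max L0L]] := exists_max_left_ideal L0_ideal piL0 L0N1.
have Lj : L j by have [_] := (psi_eq0 Oj).1 pj; apply.
have Lw : L w.
  by apply: L0L; exists qone, 0; rewrite qmul1l scaler0 addr0; split=> //; exact: O0.
case: L_max => L_ideal [x [Ox Lx]] _.
have Lt : L (t *: qone).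
  have -> : t *: qone = j - w by rewrite opprB addrC subrK.
  by case: (L_ideal) => _ _ LB _; apply: LB.
exact: Lx (left_ideal1 L_ideal (left_ideal_unit L_ideal (order_unit_C t_unit) Lt) Ox).
Qed.

Lemma red_eq x y : in_OF v x -> in_OF v y -> in_pF v (x - y) -> red x = red y.
Proof.
move=> x_int y_int xy1.
have xy_int := vgeB x_int y_int.
by rewrite -(subrK y x) redD // (proj2 (red_eq0 xy_int) xy1) add0r.
Qed.

Lemma psi_eq_scalar x : O x -> exists2 l, vge 0 l & psi x = psi (l *: qone).
Proof.
move=> Ox.
have /choice[pre pre_red] : forall t, exists c, vge 0 c /\ red c = t.
  by move=> t; have [c c_int <-] := red_onto t; exists c.
pose sc t := psi (pre t *: qone).
have sc_inj : injective sc.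
  move=> t1 t2; rewrite /sc => e; have [[i1 <-] [i2 <-]] := (pre_red t1, pre_red t2).
  apply: red_eq => //; apply: contrapT => t12.
  have := psi_unit (order_unit_C (OF_unit_int_notpF (vgeB i1 i2) t12)).
  by rewrite scalerBl (psiB (OC i1) (OC i2)) subr_eq0 => /eqP; apply.
have red_r t : t \in map red r.
  have [c c_int <-] := red_onto t; have [y ry cy] := r_onto c_int.
  by rewrite (red_eq c_int (r_int ry) cy); apply: map_f.
set s := undup (map red r).
have sc_uniq : uniq (map sc s) by rewrite map_inj_uniq // undup_uniq.
have sc_sub : {subset map sc s <= s} by move=> y _; rewrite mem_undup red_r.
have [_ sc_s] := uniq_min_size sc_uniq sc_sub (eq_leq (esym (size_map sc s))).
have /mapP[t _ ->] : psi x \in map sc s by rewrite sc_s mem_undup red_r.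
by exists (pre t); case: (pre_red t).
Qed.

Hypotheses (hc : v_complete v) (hnd : nondyadic v).

Lemma nrd_order_unit t :
  (exists x, order_unit a b O x /\ nrd x = t) <-> (exists u, OF_unit v u /\ t = u ^+ 2).
Proof.
split=> [[x [x_unit <-]] | [u [u_unit ->]]]; last first.
  by exists (u *: qone); split; [exact: order_unit_C | rewrite nrdZ nrd1 mulr1].
have [Ox _] := x_unit; have [l l_int psi_xl] := psi_eq_scalar Ox.
have l_unit : OF_unit v l.
  apply: (OF_unit_int_notpF l_int) => l1; move: (psi_unit x_unit).
  by rewrite psi_xl psi_pF ?eqxx.
have [l0 _] := l_unit; have l'_int := OF_unit_int (OF_unitV l_unit).
have Oj : O (l^-1 *: x - qone) by apply: OB O1; apply: OZ l'_int Ox.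
have pj : psi (l^-1 *: x - qone) = 0.
  have Ol' : O (l^-1 *: qone) := OC l'_int.
  rewrite (psiB (OZ l'_int Ox) O1) -(qmulCl a b) (psiM Ol' Ox) psi_xl.
  by rewrite -(psiM Ol' (OC l_int)) qmulCC mulVf // scale1r subrr.
have -> : x = l *: (1 *: qone + (l^-1 *: x - qone)).
  by rewrite scale1r addrC subrK scalerA mulfV // scale1r.
move: (l^-1 *: x - qone) Oj pj => j Oj pj.
have w1 : vge 1 (1 ^+ 2 + 1 * trd j + nrd j - 1).
  have -> : 1 ^+ 2 + 1 * trd j + nrd j - 1 = trd j + nrd j by ring.
  by apply: vgeD; [apply: psi_ker_trd | apply: psi_ker_nrd].
have [s s_unit ew] := hensel_sqrt hc hnd w1.
by exists (l * s); split; [exact: OF_unitM | rewrite nrdZ nrdDC ew exprMn].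
Qed.

End ResidueMap.
End Order.
End Valuation.

Unset Implicit Arguments.

Theorem lemma3p4 (F : fieldType) (v : F -> int) (a b : F)
    (O : 'rV[F]_4 -> Prop) :
  nonarch_local_field v -> nondyadic v -> a != 0 -> b != 0 ->
  is_order a b v O -> Bass a b v O -> eichler_zero a b v O ->
  forall t : F,
    (exists x, order_unit a b O x /\ nrd a b x = t) <->
    (exists u, OF_unit v u /\ t = u ^+ 2).
Proof.
move=> [hv hc [r [r_int r_onto]]] hnd _ _ [[n [g [O_span _]]] O1 OM] _
  [_ [k [red [psi [[redD _ _ red_onto red_eq0] [psiD psiM psi1 _ psi_eq0]]]]]].
have [_ _ [pi [pi0 vpi]]] := hv.
exact: (nrd_order_unit hv O_span O1 OM pi0 vpi r_int r_onto
  redD red_onto red_eq0 psiD psiM psi1 psi_eq0 hc hnd).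
Qed.
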